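(* Let $[W]\in\mathcal S$ be nonzero. Then the minimal weight of $[W]$ is $\ge 2$. If the minimal weight of $[W]$ is $2$, then up to a permutation of the three coordinates, $[W]$ has the form (1) $(a,a,0)$ with $a\in\Phi\setminus\{0\}$, or (2) $(a+b+c,a+c,b+c)$ with $a,b\in\Phi\setminus\{0\}$, $c\in\Psi$, $a+c$ and $b+c$ non-singular, and $a+b+c$ non-zero singular.
   Context: $EE_8=\sqrt2E_8$, $U=V_{EE_8}^+$; $R(U)$, the group (under fusion) of isomorphism classes of irreducible $U$-modules, $\cong\mathbb Z_2^{10}$, is a quadratic space over $\mathbb Z_2$ with $q([M])=0$ or $1$ according as the $L(0)$-weights of $M$ lie in $\mathbb Z$ or $\frac12+\mathbb Z$. Nonzero singular classes have minimal weight $1$ and non-singular classes have minimal weight $\frac12$. $R(U^{\otimes3})=R(U)^3$, where $(a,b,c)$ is the class of $A\otimes B\otimes C$, with $q(a,b,c)=q(a)+q(b)+q(c)$. $\Phi,\Psi$ are maximal totally singular subspaces of $R(U)$ with $\Phi\cap\Psi=0$; $\mathcal S=\mathrm{span}_{\mathbb Z_2}\{(a,a,0),(0,a,a),(b,b,b)\mid a\in\Phi,b\in\Psi\}$. The minimal weight of a class $[W]$ is the minimal $L(0)$-eigenvalue on the irreducible module $W$. *)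

From HB Require Import structures.
From mathcomp Require Import all_boot all_order all_algebra all_fingroup all_field.
Set Implicit Arguments. Unset Strict Implicit. Unset Printing Implicit Defensive.
Import Order.TTheory GRing.Theory Num.Theory.
Local Open Scope ring_scope.

(* Model of R(U) = R(V_{EE_8}^+) : the 10-dimensional quadratic space over
   Z_2 of plus type, i.e. F_2^10 with the hyperbolic form
   q(x) = sum_{i<5} x_i x_{i+5}.  *)
Definition RU := 'rV['F_2]_10.

Definition qf (x : RU) : 'F_2 :=
  \sum_(i < 5) x 0 (lshift 5 i) * x 0 (rshift 5 i).

(* classes of R(U^{\otimes 3}) = R(U)^3, as functions 'I_3 -> R(U) *)
Definition RU3 := {ffun 'I_3 -> RU}.

Definition trip (a b c : RU) : RU3 := [ffun i : 'I_3 => nth 0 [:: a; b; c] i].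

Definition permtrip (s : 'S_3) (W : RU3) : RU3 := [ffun i => W (s i)].

Definition totally_singular (P : {vspace RU}) : Prop :=
  forall x, x \in P -> qf x = 0.

Definition max_totally_singular (P : {vspace RU}) : Prop :=
  totally_singular P /\
  forall P' : {vspace RU}, totally_singular P' -> (P <= P')%VS -> P' = P.

Definition S_gens (Phi Psi : {vspace RU}) : seq RU3 :=
  [seq trip a a 0 | a <- enum [set x : RU | x \in Phi]] ++
  [seq trip 0 a a | a <- enum [set x : RU | x \in Phi]] ++
  [seq trip b b b | b <- enum [set x : RU | x \in Psi]].

Definition S_space (Phi Psi : {vspace RU}) : {vspace RU3} :=
  <<S_gens Phi Psi>>%VS.

(* minimal weight of an irreducible U-module class:
   0 for the class of U itself, 1 for nonzero singular, 1/2 for non-singular *)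
Definition minwt (x : RU) : rat :=
  if x == 0 then 0 else if qf x == 0 then 1 else 1 / 2.

(* minimal weight of the class of A (x) B (x) C is the sum *)
Definition minwt3 (W : RU3) : rat := minwt (W ord0) + minwt (W (inord 1)) + minwt (W (inord 2)).

From HB Require Import structures.
From mathcomp Require Import all_boot all_order all_algebra all_fingroup all_field.
From mathcomp Require Import ring lra.
Import Order.TTheory GRing.Theory Num.Theory.
Local Open Scope ring_scope.

(* Every element of S is (a1 + b, a1 + a2 + b, a2 + b) with a1, a2 in Phi and
   b in Psi.  If b = 0 the three coordinates are singular and each is the sum
   of the other two, so either all vanish, or exactly one does (weight 2,
   shape (1)), or none does (weight 3).  If b <> 0, Phi :&: Psi = 0 makes all
   three coordinates nonzero, and polarising q over the singular vectors
   a1, a2, a1 + a2, b gives q(a1 + a2 + b) = q(a1 + b) + q(a2 + b): an even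
   number of coordinates is non-singular, so the weight is 3 or
   1 + 1/2 + 1/2 = 2, and the latter case is shape (2). *)

Lemma F2_cases (t : 'F_2) : t = 0 \/ t = 1.
Proof. by case: t => [[|[|//]]] lt_t2; [left | right]; apply: val_inj. Qed.

Lemma F2_add11 : 1 + 1 = 0 :> 'F_2.
Proof. exact: val_inj. Qed.

Lemma addrr_F2 (V : lmodType 'F_2) (x : V) : x + x = 0.
Proof. by rewrite -[x]scale1r -scalerDl F2_add11 scale0r. Qed.

Lemma addrKK_F2 (V : lmodType 'F_2) (x y : V) : x + y + y = x.
Proof. by rewrite -addrA addrr_F2 addr0. Qed.

Lemma addv_cap0_neq0 {K : fieldType} {vT : vectType K} {U V : {vspace vT}}
    {u v : vT} :
  (U :&: V = 0)%VS -> u \in U -> v \in V -> v != 0 -> u + v != 0.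
Proof.
move=> UV0 Uu Vv; apply: contra => /eqP uv0.
rewrite -memv0 -UV0 memv_cap Vv andbT.
have -> : v = - u by apply/eqP; rewrite -addr_eq0 addrC uv0.
by rewrite memvN.
Qed.

Lemma qf0 : qf 0 = 0.
Proof. by apply: big1 => i _; rewrite mxE mul0r. Qed.

Lemma qf_add3 u v w :
  qf (u + v + w) =
  qf (u + v) + qf (u + w) + qf (v + w) - qf u - qf v - qf w.
Proof.
rewrite /qf -!big_split -!sumrN -!big_split /=.
by apply: eq_bigr => i _; rewrite !mxE; ring.
Qed.

Lemma qf_add3_singular {u v w} :
  qf u = 0 -> qf v = 0 -> qf (u + v) = 0 -> qf w = 0 ->
  qf (u + v + w) = qf (u + w) + qf (v + w).
Proof. by move=> qu qv quv qw; rewrite qf_add3 quv qu qv qw !subr0 add0r. Qed.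

Lemma nonsingular_addr_neq0 a c : qf c = 0 -> qf (a + c) != 0 -> a != 0.
Proof. by move=> qc; apply: contraNneq => ->; rewrite add0r qc. Qed.

Lemma nonsingular_neq0 {x} : qf x = 1 -> x != 0.
Proof.
move=> qx; apply/eqP => x0; move: qx.
by rewrite x0 qf0 => /eqP; rewrite eq_sym oner_eq0.
Qed.

Lemma minwt_singular {x} : qf x = 0 -> x != 0 -> minwt x = 1.
Proof. by rewrite /minwt => -> /negPf ->; rewrite eqxx. Qed.

Lemma minwt_nonsingular {x} : qf x = 1 -> minwt x = 1 / 2.
Proof.
by move=> qx; rewrite /minwt (negPf (nonsingular_neq0 qx)) qx oner_eq0.
Qed.

Lemma minwt0 : minwt 0 = 0.
Proof. by rewrite /minwt eqxx. Qed.

Lemma trip0 : trip 0 0 0 = 0.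
Proof. by apply/ffunP => -[[|[|[|//]]] ?]; rewrite !ffunE. Qed.

Lemma tripD a b c a' b' c' :
  trip a b c + trip a' b' c' = trip (a + a') (b + b') (c + c').
Proof. by apply/ffunP => -[[|[|[|//]]] ?]; rewrite !ffunE. Qed.

Lemma tripZ k a b c : k *: trip a b c = trip (k *: a) (k *: b) (k *: c).
Proof. by apply/ffunP => -[[|[|[|//]]] ?]; rewrite !ffunE //= scaler0. Qed.

Lemma minwt3_trip x y z : minwt3 (trip x y z) = minwt x + minwt y + minwt z.
Proof. by rewrite /minwt3 !ffunE /= !inordK. Qed.

Definition o0 : 'I_3 := @Ordinal 3 0 isT.
Definition o1 : 'I_3 := @Ordinal 3 1 isT.
Definition o2 : 'I_3 := @Ordinal 3 2 isT.

Lemma permtrip1 W : permtrip 1 W = W.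
Proof. by apply/ffunP => i; rewrite ffunE perm1. Qed.

Lemma permtrip01 x y z : permtrip (tperm o0 o1) (trip x y z) = trip y x z.
Proof. by apply/ffunP => -[[|[|[|//]]] ?]; rewrite !ffunE permE /= ?ffunE. Qed.

Lemma permtrip02 x y z : permtrip (tperm o0 o2) (trip x y z) = trip z y x.
Proof. by apply/ffunP => -[[|[|[|//]]] ?]; rewrite !ffunE permE /= ?ffunE. Qed.

Lemma permtrip12 x y z : permtrip (tperm o1 o2) (trip x y z) = trip x z y.
Proof. by apply/ffunP => -[[|[|[|//]]] ?]; rewrite !ffunE permE /= ?ffunE. Qed.

Definition S_form (Phi Psi : {vspace RU}) (W : RU3) : Prop :=
  exists a1 a2 b, [/\ a1 \in Phi, a2 \in Phi, b \in Psi &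
                      W = trip (a1 + b) (a1 + a2 + b) (a2 + b)].

Lemma S_spaceP Phi Psi W : W \in S_space Phi Psi -> S_form Phi Psi W.
Proof.
move=> SW; rewrite (@coord_span _ _ _ (in_tuple (S_gens Phi Psi)) W SW).
apply: (big_ind (S_form Phi Psi)).
- by exists 0, 0, 0; rewrite !mem0v !addr0 trip0.
- move=> _ _ [a1 [a2 [b [Ha1 Ha2 Hb ->]]]] [a1' [a2' [b' [Ha1' Ha2' Hb' ->]]]].
  exists (a1 + a1'), (a2 + a2'), (b + b'); rewrite !memvD // tripD.
  by split=> //; congr trip; apply/rowP => j; rewrite !mxE; ring.
- move=> i _; set k := coord _ _ _.
  have : (S_gens Phi Psi)`_i \in S_gens Phi Psi.
    by apply: mem_nth; exact: ltn_ord.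
  rewrite !mem_cat => /or3P[] /mapP[a]; rewrite mem_enum inE => Ha ->.
  + exists (k *: a), 0, 0; rewrite memvZ // !mem0v tripZ.
    by split=> //; congr trip; apply/rowP => j; rewrite !mxE; ring.
  + exists 0, (k *: a), 0; rewrite memvZ // !mem0v tripZ.
    by split=> //; congr trip; apply/rowP => j; rewrite !mxE; ring.
  + exists 0, 0, (k *: a); rewrite memvZ // !mem0v tripZ.
    by split=> //; congr trip; apply/rowP => j; rewrite !mxE; ring.
Qed.

Section WeightTwo.

Variables Phi Psi : {vspace RU}.
Hypothesis Phi_singular : totally_singular Phi.
Hypothesis Psi_singular : totally_singular Psi.
Hypothesis Phi_Psi_cap0 : (Phi :&: Psi = 0)%VS.

Definition Phi_shape (W : RU3) : Prop :=
  exists a, [/\ a \in Phi, a != 0 & W = trip a a 0].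

Definition mixed_shape (W : RU3) : Prop :=
  exists a b c,
    [/\ a \in Phi, a != 0, b \in Phi, b != 0 & c \in Psi] /\
    [/\ qf (a + c) != 0, qf (b + c) != 0, a + b + c != 0,
        qf (a + b + c) = 0 & W = trip (a + b + c) (a + c) (b + c)].

Definition weight2_shape (W : RU3) : Prop :=
  exists s : 'S_3, Phi_shape (permtrip s W) \/ mixed_shape (permtrip s W).

Lemma mixed_shape_trip {a b c} :
  a \in Phi -> b \in Phi -> c \in Psi ->
  qf (a + c) = 1 -> qf (b + c) = 1 -> qf (a + b + c) = 0 -> a + b + c != 0 ->
  mixed_shape (trip (a + b + c) (a + c) (b + c)).
Proof.
move=> Phi_a Phi_b Psi_c qac qbc qabc abc0.
have qc := Psi_singular _ Psi_c.
have qac0 : qf (a + c) != 0 by rewrite qac oner_eq0.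
have qbc0 : qf (b + c) != 0 by rewrite qbc oner_eq0.
exists a, b, c; split; split=> //; exact: nonsingular_addr_neq0 qc _.
Qed.

Lemma minwt3_Phi_trip a1 a2 :
  a1 \in Phi -> a2 \in Phi -> trip a1 (a1 + a2) a2 != 0 ->
  let W := trip a1 (a1 + a2) a2 in
  2 <= minwt3 W /\ (minwt3 W = 2 -> weight2_shape W).
Proof.
move=> Phi_a1 Phi_a2 W0 W; rewrite /W minwt3_trip.
have q1 := Phi_singular _ Phi_a1; have q2 := Phi_singular _ Phi_a2.
have q12 := Phi_singular _ (memvD Phi_a1 Phi_a2).
have [a1_0|a1_n0] := eqVneq a1 0; have [a2_0|a2_n0] := eqVneq a2 0.
- by rewrite a1_0 a2_0 addr0 trip0 eqxx in W0.
- rewrite a1_0 add0r minwt0 (minwt_singular q2 a2_n0); split; first lra.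
  by move=> _; exists (tperm o0 o2); left; exists a2; rewrite permtrip02.
- rewrite a2_0 addr0 minwt0 (minwt_singular q1 a1_n0); split; first lra.
  by move=> _; exists 1%g; left; exists a1; rewrite permtrip1.
have [a12_0|a12_n0] := eqVneq (a1 + a2) 0.
- rewrite a12_0 minwt0 (minwt_singular q1 a1_n0) (minwt_singular q2 a2_n0).
  split; first lra; move=> _; exists (tperm o1 o2); left; exists a1.
  by rewrite permtrip12 -[a2](addrKK_F2 _ a2 a1) (addrC a2) a12_0 add0r.
- rewrite (minwt_singular q1 a1_n0) (minwt_singular q2 a2_n0).
  rewrite (minwt_singular q12 a12_n0); split=> [|w3]; first lra.
  by exfalso; move: w3; lra.
Qed.

Lemma minwt3_mixed_trip a1 a2 b :
  a1 \in Phi -> a2 \in Phi -> b \in Psi -> b != 0 ->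
  let W := trip (a1 + b) (a1 + a2 + b) (a2 + b) in
  2 <= minwt3 W /\ (minwt3 W = 2 -> weight2_shape W).
Proof.
move=> Phi_a1 Phi_a2 Psi_b b_n0 W; rewrite /W minwt3_trip.
have Phi_a12 := memvD Phi_a1 Phi_a2.
have nz a : a \in Phi -> a + b != 0.
  by move=> Phi_a; apply: addv_cap0_neq0 Phi_Psi_cap0 Phi_a Psi_b b_n0.
have x_n0 := nz _ Phi_a1; have y_n0 := nz _ Phi_a12; have z_n0 := nz _ Phi_a2.
have qy : qf (a1 + a2 + b) = qf (a1 + b) + qf (a2 + b).
  apply: qf_add3_singular (Psi_singular _ Psi_b); exact: Phi_singular.
have [qx|qx] := F2_cases (qf (a1 + b)); have [qz|qz] := F2_cases (qf (a2 + b));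
  rewrite qx qz ?addr0 ?add0r ?F2_add11 in qy.
- rewrite (minwt_singular qx x_n0) (minwt_singular qy y_n0).
  rewrite (minwt_singular qz z_n0); split=> [|w3]; first lra.
  by exfalso; move: w3; lra.
- rewrite (minwt_singular qx x_n0) (minwt_nonsingular qy).
  rewrite (minwt_nonsingular qz).
  split=> [|_]; first lra; exists 1%g; right; rewrite permtrip1.
  have := mixed_shape_trip Phi_a12 Phi_a2 Psi_b qy qz.
  by rewrite addrKK_F2; apply.
- rewrite (minwt_nonsingular qx) (minwt_nonsingular qy).
  rewrite (minwt_singular qz z_n0).
  split=> [|_]; first lra; exists (tperm o0 o2); right; rewrite permtrip02.
  have := mixed_shape_trip (memvD Phi_a2 Phi_a1) Phi_a1 Psi_b.
  by rewrite addrKK_F2 (addrC a2 a1); apply.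
- rewrite (minwt_nonsingular qx) (minwt_singular qy y_n0).
  rewrite (minwt_nonsingular qz).
  split=> [|_]; first lra; exists (tperm o0 o1); right; rewrite permtrip01.
  exact: mixed_shape_trip.
Qed.

End WeightTwo.

Theorem lemma2p19 (Phi Psi : {vspace RU}) :
  max_totally_singular Phi -> max_totally_singular Psi ->
  (Phi :&: Psi)%VS = 0%VS ->
  forall W : RU3, W \in S_space Phi Psi -> W != 0 ->
  2 <= minwt3 W /\
  (minwt3 W = 2 ->
   exists s : 'S_3,
     (exists a, [/\ a \in Phi, a != 0 & permtrip s W = trip a a 0]) \/
     (exists a b c,
        [/\ a \in Phi, a != 0, b \in Phi, b != 0 & c \in Psi] /\
        [/\ qf (a + c) != 0, qf (b + c) != 0, a + b + c != 0,
            qf (a + b + c) = 0 &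
            permtrip s W = trip (a + b + c) (a + c) (b + c)])).
Proof.
move=> [Phi_singular _] [Psi_singular _] Phi_Psi_cap0 W.
move=> /S_spaceP[a1 [a2 [b [Phi_a1 Phi_a2 Psi_b ->]]]] W_n0.
have [b0|b_n0] := eqVneq b 0.
  rewrite b0 !addr0 in W_n0 *.
  exact: minwt3_Phi_trip.
exact: minwt3_mixed_trip.
Qed.
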